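(* Let $k\geqslant 1$ be an integer and let $G$ be a chordal graph. Then $G$ is $\mathbf{W_k}$ if and only if there exists a partition of $V(G)$ into simplices such that each simplex of the partition contains at least $k$ simplicial vertices of $G$.
   Context: All graphs are finite and simple. A chordal graph is a graph with no induced cycle of length at least four. A vertex $v$ is simplicial in $G$ if its neighbourhood $N(v)$ induces a complete graph; in that case $N[v]=N(v)\cup\{v\}$ is called a simplex. For a positive integer $k$, a graph $G$ is $\mathbf{W_k}$ if for any $k$ pairwise disjoint independent sets $A_1,\dots,A_k$ of $G$ there exist $k$ pairwise disjoint maximum independent sets $S_1,\dots,S_k$ of $G$ with $A_i\subseteq S_i$ for all $i\in[k]$. *)

From mathcomp Require Import all_boot.
Set Implicit Arguments. Unset Strict Implicit. Unset Printing Implicit Defensive.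

Definition simple_graph (T : finType) (e : rel T) : Prop :=
  symmetric e /\ irreflexive e.

Section Graph.
Variables (T : finType) (e : rel T).

Definition nbhd (v : T) : {set T} := [set u | e v u].
Definition cnbhd (v : T) : {set T} := v |: nbhd v.

Definition clique (A : {set T}) : bool :=
  [forall x in A, forall y in A, (x != y) ==> e x y].

Definition simplicial (v : T) : bool := clique (nbhd v).

Definition simplex (A : {set T}) : bool :=
  [exists v, simplicial v && (A == cnbhd v)].

Definition independent (A : {set T}) : bool :=
  [forall x in A, forall y in A, ~~ e x y].

Definition max_independent (S : {set T}) : bool :=
  independent S && [forall A : {set T}, independent A ==> (#|A| <= #|S|)].

Definition induced_cycle (c : seq T) : bool :=
  uniq c && (4 <= size c) &&
  [forall i : 'I_(size c), forall j : 'I_(size c),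
     e (tnth (in_tuple c) i) (tnth (in_tuple c) j) ==
     ((j == (i.+1 %% size c) :> nat) || (i == (j.+1 %% size c) :> nat))].

Definition chordal : Prop := forall c : seq T, ~~ induced_cycle c.

Definition W_ (k : nat) : Prop :=
  forall A : 'I_k -> {set T},
    (forall i, independent (A i)) ->
    (forall i j, i != j -> [disjoint A i & A j]) ->
    exists S : 'I_k -> {set T},
      [/\ forall i, max_independent (S i),
          forall i j, i != j -> [disjoint S i & S j] &
          forall i, A i \subset S i].

End Graph.

(* If V is partitioned into simplices with at least k simplicial vertices each,
   every block is a clique, so an independent set meeting every block is maximum.
   Given disjoint independent sets A_1..A_k, each A_j meets a block B at most
   once, so B has enough simplicial vertices outside all A_j to give a distinct
   one to every A_i missing B; as all neighbours of a simplicial vertex of B lie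
   in B, the enlarged sets stay independent, and they meet every block.
   Conversely, W_k with k >= 1 makes G well covered.  In a chordal graph, a
   clique K all of whose vertices have neighbours outside K is dominated by an
   independent set avoiding K: in each component of G - K pick a vertex seeing
   every vertex of K that sees the component (otherwise a shortest path closes a
   hole).  Extending such a set to a maximum independent set and counting it
   against the simplices of G - N[v], for a simplicial v, shows by induction that
   in a chordal well-covered graph the simplices cover V; an exchange argument
   makes distinct simplices disjoint.  If a simplex B had fewer than k simplicial
   vertices, apply W_k to these vertices as singletons together with an
   independent set dominating the other vertices of B: the maximum independent
   set containing the latter meets B in a simplicial vertex, which already lies
   in another of the k sets. *)

From Stdlib Require Import Classical.
From mathcomp Require Import all_boot zify.
Set Implicit Arguments. Unset Strict Implicit. Unset Printing Implicit Defensive.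

Section Embedding.
Variables (I T : finType) (M : {set I}) (A : {set T}) (x0 : T).
Hypothesis le_MA : #|M| <= #|A|.

Definition embedding i := nth x0 (enum A) (index i (enum M)).

Lemma index_enum_lt i : i \in M -> index i (enum M) < size (enum A).
Proof. by move=> iM; rewrite -cardE (leq_trans _ le_MA) // cardE index_mem mem_enum. Qed.

Lemma embedding_in i : i \in M -> embedding i \in A.
Proof. by move=> iM; rewrite -mem_enum mem_nth ?index_enum_lt. Qed.

Lemma embedding_inj : {in M &, injective embedding}.
Proof.
move=> i j iM jM /eqP; rewrite /embedding nth_uniq ?index_enum_lt ?enum_uniq // => /eqP.
by apply: (index_inj i); rewrite mem_enum.
Qed.

End Embedding.

(** * Cliques and independent sets *)

Section Cliques.
Variables (T : finType) (e : rel T).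

Lemma cliqueP (A : {set T}) :
  reflect {in A &, forall x y, x != y -> e x y} (clique e A).
Proof.
apply: (iffP forall_inP) => [h x y xA yA | h x xA].
  by move/forall_inP: (h x xA) => /(_ y yA) /implyP.
by apply/forall_inP => y yA; apply/implyP; apply: h.
Qed.

Lemma independentP (A : {set T}) :
  reflect {in A &, forall x y, ~~ e x y} (independent e A).
Proof.
apply: (iffP forall_inP) => [h x y xA yA | h x xA].
  by move/forall_inP: (h x xA); apply.
by apply/forall_inP => y yA; apply: h.
Qed.

Lemma clique_subset (A B : {set T}) : A \subset B -> clique e B -> clique e A.
Proof.
move=> /subsetP AB /cliqueP cB; apply/cliqueP => x y xA yA; exact: cB (AB x xA) (AB y yA).
Qed.

Lemma independent_subset (A B : {set T}) :
  A \subset B -> independent e B -> independent e A.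
Proof.
move=> /subsetP AB /independentP iB; apply/independentP => x y xA yA.
exact: iB (AB x xA) (AB y yA).
Qed.

Lemma card_clique_independent (C I : {set T}) :
  clique e C -> independent e I -> #|C :&: I| <= 1.
Proof.
move=> /cliqueP cC /independentP iI; apply/card_le1_eqP => x y.
rewrite !inE => /andP [xC xI] /andP [yC yI]; apply/eqP/negPn/negP => yx.
by move: (iI y x yI xI); rewrite cC.
Qed.

Lemma card_cover_le (F : {set {set T}}) :
  {in F, forall B : {set T}, #|B| <= 1} -> #|cover F| <= #|F|.
Proof.
by move=> F1; apply: leq_trans (leq_card_cover F).1 _; rewrite -sum1_card; apply: leq_sum.
Qed.

Lemma independent_card_le_cover (J : {set T}) (F : {set {set T}}) :
  independent e J -> {in F, forall B, clique e B} -> J \subset cover F ->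
  #|J| <= #|F|.
Proof.
move=> iJ cF JF; have JF' : J \subset cover [set B :&: J | B in F].
  apply/subsetP => x xJ; have /bigcupP [B BF xB] := subsetP JF x xJ.
  by apply/bigcupP; exists (B :&: J); [apply: imset_f | rewrite inE xB].
apply: leq_trans (subset_leq_card JF') (leq_trans (card_cover_le _) (leq_imset_card _ _)).
by move=> _ /imsetP [B BF ->]; apply: card_clique_independent (cF B BF) iJ.
Qed.

End Cliques.

(** * Induced subgraphs, simplices and well-covered graphs *)

Section Graph.
Variables (T : finType) (e : rel T).
Hypotheses (sym_e : symmetric e) (irr_e : irreflexive e).
Implicit Types (U W I J K R C X B : {set T}) (P : {set {set T}}) (u v w x y z : T).

Definition nbhd_in (U : {set T}) v := [set u in U | e v u].
Definition cnbhd_in (U : {set T}) v := v |: nbhd_in U v.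
Definition simplicial_in (U : {set T}) v := clique e (nbhd_in U v).

Definition max_independent_in (U J : {set T}) : Prop :=
  [/\ J \subset U, independent e J &
      forall I : {set T}, I \subset U -> independent e I -> #|I| <= #|J|].

Definition well_covered_in (U : {set T}) : Prop :=
  forall I : {set T}, I \subset U -> independent e I ->
  exists2 J : {set T}, I \subset J & max_independent_in U J.

Lemma in_nbhd_in U v u : (u \in nbhd_in U v) = (u \in U) && e v u.
Proof. by rewrite inE. Qed.

Lemma nbhd_inT v : nbhd_in [set: T] v = nbhd e v.
Proof. by apply/setP => u; rewrite !inE. Qed.

Lemma independentU1 (I : {set T}) v :
  independent e I -> {in I, forall y, ~~ e v y} -> independent e (v |: I).
Proof.
move=> /independentP iI vI; apply/independentP => x y; rewrite !inE.
case/predU1P => [-> | xI] /predU1P [-> | yI]; rewrite ?irr_e ?vI //.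
  by rewrite sym_e vI.
exact: iI.
Qed.

Lemma cliqueU1 K v : clique e K -> {in K, forall k, e k v} -> clique e (v |: K).
Proof.
move=> /cliqueP cK Kv; apply/cliqueP => x y; rewrite !inE.
case/predU1P => [-> | xK] /predU1P [-> | yK] xy; rewrite ?eqxx // in xy.
- by rewrite sym_e Kv.
- exact: Kv.
- exact: cK.
Qed.

Lemma cnbhd_in_sub U v : v \in U -> cnbhd_in U v \subset U.
Proof. by move=> vU; apply/subsetP => x; rewrite !inE => /predU1P [-> | /andP []]. Qed.

Lemma clique_cnbhd_in U v : simplicial_in U v -> clique e (cnbhd_in U v).
Proof.
move=> /cliqueP sv; apply/cliqueP => x y; rewrite !inE.
case/predU1P => [-> | /andP [xU evx]] /predU1P [-> | /andP [yU evy]]; rewrite ?eqxx //.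
- by rewrite sym_e.
- by apply: sv; rewrite inE ?xU ?yU.
Qed.

Lemma independentU1_cnbhd_in U v I : I \subset U :\: cnbhd_in U v ->
  independent e I -> independent e (v |: I).
Proof.
move=> /subsetP IU iI; apply: independentU1 => // y /IU.
by rewrite !inE negb_or -andbA => /and3P [_ + yU]; rewrite yU.
Qed.

Lemma cnbhd_in_subset_adj U w1 w2 : w1 \in U -> simplicial_in U w1 ->
  w2 \in nbhd_in U w1 -> cnbhd_in U w1 \subset cnbhd_in U w2.
Proof.
move=> w1U /cliqueP sw1 w2N; have := w2N; rewrite inE => /andP [w2U ew12].
apply/subsetP => u; rewrite !inE => /predU1P [-> | /andP [uU ew1u]].
  by rewrite w1U sym_e ew12 orbT.
by case: eqVneq => [// | uw2]; rewrite uU /= sym_e sw1 // inE uU.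
Qed.

Lemma simplicial_cnbhd_in_eq U w1 w2 : w1 \in U ->
  simplicial_in U w1 -> simplicial_in U w2 -> w2 \in cnbhd_in U w1 ->
  cnbhd_in U w2 = cnbhd_in U w1.
Proof.
move=> w1U sw1 sw2; rewrite /cnbhd_in in_setU1 => /predU1P [-> // | w2N].
have := w2N; rewrite inE => /andP [w2U ew12].
by apply/eqP; rewrite eqEsubset !cnbhd_in_subset_adj // inE w1U sym_e.
Qed.

(** * Walks and components *)

Definition induced_path (f : nat -> T) (n : nat) : Prop :=
  (forall i j, i < j <= n -> f i != f j) /\
  (forall i j, i <= n -> j <= n -> e (f i) (f j) = (j == i.+1) || (i == j.+1)).

Lemma induced_path_drop f n i : induced_path f n -> i <= n ->
  induced_path (fun l => f (i + l)) (n - i).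
Proof.
move=> [finj fadj] le_in; split=> [l m lm | l m le_l le_m]; first by apply: finj; lia.
by rewrite fadj -?addnS ?eqn_add2l //; lia.
Qed.

Definition walk (W : {set T}) x (f : nat -> T) n : Prop :=
  [/\ f 0 = x, forall i, i < n -> e (f i) (f i.+1) & forall i, i <= n -> f i \in W].

Lemma walk_prefix W x f n i : walk W x f n -> i <= n -> walk W x f i.
Proof. by move=> [f0 fe fW] le_in; split => // l ?; [apply: fe | apply: fW]; lia. Qed.

Lemma walk_shortcut W x f n i j : walk W x f n -> i < j <= n -> e (f i) (f j) ->
  exists g, walk W x g (n - (j - i.+1)) /\ g (n - (j - i.+1)) = f n.
Proof.
move=> [f0 fe fW] /andP [ij jn] eij; pose d := j - i.+1.
exists (fun l => if l <= i then f l else f (l + d)); split; last first.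
  by rewrite ifN; [congr f | ]; lia.
split=> [|l ln|l ln] //=.
- case: (ltngtP l i) => li.
  + by apply: fe; lia.
  + by rewrite addSn; apply: fe; lia.
  + by rewrite li (_ : i.+1 + d = j) //; lia.
- by case: ifP => _; apply: fW; lia.
Qed.

Lemma shortest_walk W x (P : pred T) :
  (exists n f, walk W x f n /\ P (f n)) ->
  exists n f, [/\ walk W x f n, P (f n) &
     forall m g, walk W x g m -> P (g m) -> n <= m].
Proof.
move=> [n [f [w p]]]; have [N] := ubnP n; elim: N => // N IH in n f w p *.
move=> lt_nN; case: (classic (exists m g, [/\ walk W x g m, P (g m) & m < n])).
  by move=> [m [g [wg pg lt_mn]]]; apply: (IH m g) => //; lia.
move=> no_shorter; exists n, f; split => // m g wg pg.
by rewrite leqNgt; apply/negP => lt_mn; apply: no_shorter; exists m, g.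
Qed.

Lemma shortest_walk_induced W x (P : pred T) n f :
  walk W x f n -> P (f n) -> (forall m g, walk W x g m -> P (g m) -> n <= m) ->
  (forall i, i < n -> ~~ P (f i)) /\ induced_path f n.
Proof.
move=> w pn minimal; have [_ fe _] := w.
have not_shorter m : m < n -> ~ exists g, walk W x g m /\ g m = f n.
  by move=> lt_mn [g [wg gm]]; move: (minimal m g wg); rewrite gm => /(_ pn); lia.
have no_chord i j : i.+1 < j <= n -> ~~ e (f i) (f j).
  move=> ij; apply/negP => eij; apply: (not_shorter (n - (j - i.+1))); first lia.
  by apply: walk_shortcut w _ eij; lia.
split; last split.
- move=> i lt_in; apply/negP => pi.
  by move: (minimal i f (walk_prefix w (ltnW lt_in)) pi); lia.
- move=> i j /andP [ij jn]; apply/negP => /eqP fij.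
  case: (ltnP j n) => [lt_jn | le_nj].
  + apply: (not_shorter (n - (j - i))); first lia.
    by apply: (walk_shortcut (j := j.+1) w); rewrite ?fij ?fe //; lia.
  + have := minimal i f (walk_prefix w (ltnW (leq_trans ij jn))).
    by rewrite fij (_ : j = n) => [/(_ pn)|]; lia.
- move=> i j i_le j_le; case: (ltngtP i j) => [ij|ji|<-]; last by rewrite irr_e; lia.
  + case: (eqVneq j i.+1) => [->|ne]; first by rewrite fe; lia.
    by rewrite (negbTE (no_chord i j _)); lia.
  + case: (eqVneq i j.+1) => [->|ne]; first by rewrite sym_e fe ?orbT; lia.
    by rewrite sym_e (negbTE (no_chord j i _)); lia.
Qed.


Definition edge_in (W : {set T}) := [rel u v | [&& u \in W, v \in W & e u v]].
Definition comp_in (W : {set T}) z := [set y | connect (edge_in W) z y].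

Lemma edge_in_sym W : connect_sym (edge_in W).
Proof. by apply: sym_connect_sym => u v /=; rewrite sym_e andbCA. Qed.

Lemma comp_in_id W z : z \in comp_in W z.
Proof. by rewrite inE connect0. Qed.

Lemma comp_in_eq W z y : y \in comp_in W z -> comp_in W y = comp_in W z.
Proof.
rewrite inE => zy; apply/setP => u; rewrite !inE; apply/idP/idP; first exact: connect_trans.
by apply: connect_trans; rewrite edge_in_sym.
Qed.

Lemma comp_in_edge W z x u :
  x \in comp_in W z -> x \in W -> u \in W -> e x u -> u \in comp_in W z.
Proof.
by rewrite !inE => zx xW uW exu; apply: connect_trans zx (connect1 _); rewrite /= xW uW.
Qed.

Lemma comp_in_walk (W : {set T}) z x y :
  x \in comp_in W z -> y \in comp_in W z ->
  exists n f, walk (comp_in W z) x f n /\ f n = y.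
Proof.
move=> xz yz; have /connectP [p xp ->] : connect (edge_in W) x y.
  by rewrite -(comp_in_eq xz) inE in yz.
have p_edge i : i < size p -> edge_in W (nth x (x :: p) i) (nth x (x :: p) i.+1).
  exact: pathP x xp i.
exists (size p), (nth x (x :: p)); split; last by rewrite (last_nth x).
split=> //; first by move=> i /p_edge /and3P [].
elim=> [|i IH] lt_ip; first exact: xz.
have /and3P [iW i1W ei] := p_edge i lt_ip.
exact: comp_in_edge (IH (ltnW lt_ip)) iW i1W ei.
Qed.

Lemma comp_in_sub (W : {set T}) z : z \in W -> comp_in W z \subset W.
Proof.
move=> zW; apply/subsetP => y; rewrite inE => /connectP [p].
case/lastP: p => [_ -> //|p u].
by rewrite rcons_path last_rcons => /andP [_ /and3P [_ uW _]] ->.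
Qed.

Definition simplices_in U := [set cnbhd_in U w | w in [set w in U | simplicial_in U w]].

Lemma simplices_inP U B :
  reflect (exists2 w, (w \in U) && simplicial_in U w & B = cnbhd_in U w)
          (B \in simplices_in U).
Proof.
by apply: (iffP imsetP) => [[w] | [w]]; rewrite ?inE => wS ->; exists w; rewrite ?inE.
Qed.

Lemma independent_simplex_representatives U :
  exists R, [/\ R \subset U, independent e R & #|R| = #|simplices_in U|].
Proof.
pose rep B := [pick w in U | simplicial_in U w && (cnbhd_in U w == B)].
pose R := [set w in U | simplicial_in U w && (rep (cnbhd_in U w) == Some w)].
have repP B : B \in simplices_in U ->
    exists2 w, rep B = Some w & [&& w \in U, simplicial_in U w & cnbhd_in U w == B].
  case/simplices_inP => w /andP [wU sw] ->; rewrite /rep.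
  case: pickP => [w' /andP [w'U /andP [sw' w'B]] | /(_ w)]; last by rewrite /= wU sw eqxx.
  by exists w'; rewrite ?w'U ?sw' ?w'B.
exists R; split.
- by apply/subsetP => w; rewrite inE => /andP [].
- apply/independentP => w1 w2; rewrite !inE.
  move=> /and3P [w1U sw1 /eqP r1] /and3P [w2U sw2 /eqP r2].
  apply/negP => e12; suff eq12 : w1 = w2 by rewrite eq12 irr_e in e12.
  have w2N : w2 \in cnbhd_in U w1 by rewrite !inE w2U e12 orbT.
  by apply: Some_inj; rewrite -r1 -r2 (simplicial_cnbhd_in_eq w1U sw1 sw2 w2N).
have inj : {in R &, injective (cnbhd_in U)}.
  move=> w1 w2; rewrite !inE => /and3P [_ _ /eqP r1] /and3P [_ _ /eqP r2] eqN.
  by apply: Some_inj; rewrite -r1 -r2 eqN.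
suff <- : cnbhd_in U @: R = simplices_in U by rewrite card_in_imset.
apply/setP => B; apply/imsetP/idP => [[w] | /repP [w rB /and3P [wU sw /eqP wB]]].
  by rewrite inE => /and3P [wU sw _] ->; apply/simplices_inP; exists w; rewrite ?wU.
by exists w; rewrite ?wB // /R inE wU sw wB rB eqxx.
Qed.

Lemma well_covered_in_delete U v : well_covered_in U -> v \in U -> simplicial_in U v ->
  well_covered_in (U :\: cnbhd_in U v).
Proof.
move=> wc vU sv I IUv iI; set N := cnbhd_in U v in IUv *.
have vN : v \in N by rewrite !inE eqxx.
have [|J vIJ [JU iJ maxJ]] := wc (v |: I) _ (independentU1_cnbhd_in IUv iI).
  by rewrite subUset sub1set vU (subset_trans IUv (subsetDl U N)).
have vJ : v \in J by rewrite (subsetP vIJ) ?setU11.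
have JN1 : #|J :&: N| <= 1 by rewrite setIC (card_clique_independent (clique_cnbhd_in sv)).
exists (J :\: N); last split.
- apply/subsetP => x xI; have /setDP [_ xN] := subsetP IUv x xI.
  by rewrite in_setD xN (subsetP vIJ) // setU1r.
- exact: setSD.
- exact: independent_subset (subsetDl J N) iJ.
move=> I' I'Uv iI'.
have vI' : v \notin I' by apply: contraL vN => /(subsetP I'Uv) /setDP [].
have := maxJ (v |: I') _ (independentU1_cnbhd_in I'Uv iI').
rewrite cardsU1 vI' -(cardsID N J) subUset sub1set vU (subset_trans I'Uv (subsetDl U N)).
by move/(_ isT); move: JN1; clear; lia.
Qed.

Lemma clique_simplices_in U B : B \in simplices_in U -> clique e B.
Proof. by case/simplices_inP => w /andP [_ sw] ->; apply: clique_cnbhd_in. Qed.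

Lemma simplices_in_sub U B : B \in simplices_in U -> B \subset U.
Proof. by case/simplices_inP => w /andP [wU _] ->; apply: cnbhd_in_sub. Qed.

Lemma max_independent_in_meets_simplices U v J C : v \in U -> simplicial_in U v ->
  U :\: cnbhd_in U v \subset cover (simplices_in (U :\: cnbhd_in U v)) ->
  max_independent_in U J -> C \in simplices_in (U :\: cnbhd_in U v) -> ~~ [disjoint J & C].
Proof.
move=> vU sv U'cov [JU iJ maxJ] CP'; apply/negP => JC.
set N := cnbhd_in U v in U'cov CP'; set P' := simplices_in (U :\: N) in U'cov CP'.
have [R [RU' iR cardR]] := independent_simplex_representatives (U :\: N).
have vR : v \notin R by apply/negP => /(subsetP RU'); rewrite !inE eqxx.
have lb : #|P'|.+1 <= #|J|.
  have := maxJ (v |: R) _ (independentU1_cnbhd_in RU' iR).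
  by rewrite cardsU1 vR cardR subUset sub1set vU (subset_trans RU' (subsetDl U N)); apply.
have ub : #|J| <= #|N |: (P' :\ C)|.
  apply: (independent_card_le_cover iJ) => [B | ].
    by case/setU1P => [-> | /setD1P [_ /clique_simplices_in]] //; apply: clique_cnbhd_in.
  apply/subsetP => j jJ; case: (boolP (j \in N)) => jN.
    by apply/bigcupP; exists N; rewrite ?setU11.
  have /bigcupP [B BP' jB] : j \in cover P'.
    by rewrite (subsetP U'cov) // in_setD jN (subsetP JU).
  apply/bigcupP; exists B => //; rewrite !inE BP' andbT; apply/orP; right.
  by apply: contraTneq jB => ->; rewrite (disjointFr JC jJ).
move: lb (leq_trans ub (leq_card_setU _ _).1); rewrite cards1 (cardsD1 C P') CP'.
by clear; lia.
Qed.

Lemma trivIset_simplices_in U : well_covered_in U -> trivIset (simplices_in U).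
Proof.
move=> wc; apply/trivIsetP => A B /simplices_inP [a /andP [aU sa] ->].
move=> /simplices_inP [b /andP [bU sb] ->] ne {A B}.
apply/pred0P => x /=; apply/negP => /andP [xa xb].
have nab : b \notin cnbhd_in U a.
  by apply: contra ne => /(simplicial_cnbhd_in_eq aU sa sb) ->.
have nba : a \notin cnbhd_in U b.
  by apply: contra ne => /(simplicial_cnbhd_in_eq bU sb sa) ->.
have xNa : x \in nbhd_in U a by case/setU1P: xa => // xa; rewrite -xa xb in nba.
have xNb : x \in nbhd_in U b by case/setU1P: xb => // xb; rewrite -xb xa in nab.
have xU : x \in U by move: xNa; rewrite in_nbhd_in => /andP [].
have ix : independent e [set x].
  by apply/independentP => y z /set1P -> /set1P ->; rewrite irr_e.
have [J] := wc [set x] (etrans (sub1set _ _) xU) ix.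
rewrite sub1set => xJ [JU /independentP iJ maxJ].
have away c : simplicial_in U c -> x \in nbhd_in U c -> {in J :\ x, forall y, ~~ e c y}.
  move=> /cliqueP sc xc y /setD1P [yx yJ]; apply/negP => ecy.
  by move: (iJ x y xJ yJ); rewrite sc // ?in_nbhd_in ?(subsetP JU) // eq_sym.
have notJ c : x \in nbhd_in U c -> c \notin J.
  by rewrite in_nbhd_in => /andP [_ ecx]; apply: contraL ecx => cJ; rewrite sym_e iJ.
have iJ' : independent e (a |: (b |: (J :\ x))).
  apply: independentU1 => [ | y].
    apply: independentU1 (away b sb xNb).
    by apply: independent_subset (subsetDl J _) _; apply/independentP.
  case/setU1P => [-> | ]; last exact: away a sa xNa y.
  by apply: contra nab; rewrite !inE bU => ->; rewrite orbT.
have := maxJ _ _ iJ'; rewrite cardsU1 cardsU1 (cardsD1 x J) xJ.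
have ab : a != b by apply: contraNneq nab => ->; rewrite setU11.
rewrite !inE (negPf (notJ a xNa)) (negPf (notJ b xNb)) !andbF !orbF ab.
rewrite !subUset !sub1set aU bU (subset_trans (subsetDl J _) JU) => /(_ isT).
by rewrite !add1n ltnn.
Qed.

Lemma max_independentP J : reflect (max_independent_in [set: T] J) (max_independent e J).
Proof.
apply: (iffP andP) => [[iJ /forallP maxJ] | [_ iJ maxJ]].
  by split=> // I _ iI; have /implyP := maxJ I; apply.
split=> //; apply/forallP => I; apply/implyP => iI; apply: maxJ (subsetT I) iI.
Qed.

Lemma max_independent_in_meets_cnbhd U S w : max_independent_in U S -> w \in U ->
  exists2 y, y \in S & y \in cnbhd_in U w.
Proof.
move=> [SU iS maxS] wU.
have [/exists_inP // | none] := boolP [exists y in S, y \in cnbhd_in U w].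
have wS : w \notin S.
  by apply: contra none => wS; apply/exists_inP; exists w; rewrite ?setU11.
suff: #|w |: S| <= #|S| by rewrite cardsU1 wS add1n ltnn.
apply: maxS; first by rewrite subUset sub1set wU SU.
apply: independentU1 => // y yS; apply: contra none => ewy.
by apply/exists_inP; exists y; rewrite // !inE ewy (subsetP SU) ?orbT.
Qed.

Lemma cnbhd_inT v : cnbhd_in [set: T] v = cnbhd e v.
Proof. by rewrite /cnbhd_in nbhd_inT. Qed.

Lemma simplicial_inT v : simplicial_in [set: T] v = simplicial e v.
Proof. by rewrite /simplicial_in nbhd_inT. Qed.

Lemma simplices_inT B : (B \in simplices_in [set: T]) = simplex e B.
Proof.
apply/simplices_inP/existsP => [[w /andP [_ sw] ->] | [w /andP [sw /eqP ->]]].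
  by exists w; rewrite -simplicial_inT sw cnbhd_inT eqxx.
by exists w; rewrite ?inE ?simplicial_inT ?cnbhd_inT.
Qed.

Lemma W_well_covered k : 0 < k -> W_ e k -> well_covered_in [set: T].
Proof.
move=> k_gt0 Wk I _ iI; pose i0 : 'I_k := Ordinal k_gt0.
have [|i j ij|S [maxS _ AS]] := Wk (fun i => if i == i0 then I else set0).
- by move=> i; case: ifP => // _; apply/independentP => x y; rewrite inE.
- rewrite -setI_eq0; case: (eqVneq i i0) => [ei | _]; last by rewrite set0I.
  by case: (eqVneq j i0) ij => [-> | _]; rewrite ?ei ?eqxx ?setI0.
by exists (S i0); [move: (AS i0); rewrite eqxx | apply/max_independentP].
Qed.

(** * Chordal graphs *)

Section Chordal.
Hypothesis chordal_e : chordal e.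

Lemma no_hole (g : nat -> T) m : 4 <= m ->
  (forall i j, i < j < m -> g i != g j) ->
  (forall i j, i < m -> j < m ->
     e (g i) (g j) = (j == i.+1 %% m) || (i == j.+1 %% m)) ->
  False.
Proof.
move=> m4 ginj gadj; apply: (negP (chordal_e (mkseq g m))).
have sz := size_mkseq g m.
rewrite /induced_cycle -andbA; apply/and3P; split; last first.
- apply/forallP => i; apply/forallP => j; rewrite !(tnth_nth (g 0)) /=.
  case: i j => [i im] [j jm] /=; rewrite sz in im jm.
  by rewrite !nth_mkseq // sz gadj.
- by rewrite sz.
rewrite map_inj_in_uniq ?iota_uniq // => i j; rewrite !mem_iota /= => ilt jlt gij.
by case: (ltngtP i j) => // [ij | ji]; [move: (ginj i j) | move: (ginj j i)];
  rewrite gij eqxx; lia.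
Qed.

Lemma no_hole_closing_path (f : nat -> T) n a b : 0 < n -> induced_path f n ->
  e a b -> (forall i, i <= n -> (f i != a) && (f i != b)) ->
  (forall i, i <= n -> e a (f i) = (i == 0)) ->
  (forall i, i <= n -> e b (f i) = (i == n)) ->
  False.
Proof.
move=> n_gt0 [finj fadj] eab fab ea eb.
have ab : a != b by apply: contraTneq eab => ->; rewrite irr_e.
pose g i := if i == 0 then a else if i == n.+2 then b else f i.-1.
have gS i : i <= n -> g i.+1 = f i by move=> ?; rewrite /g /= ifN //; lia.
have g0 : g 0 = a by [].
have gl : g n.+2 = b by rewrite /g eqxx.
have gcase i : i < n.+3 -> [\/ i = 0, exists2 i', i' <= n & i = i'.+1 | i = n.+2].
  case: i => [|i] ilt; [by constructor 1 | case: (ltnP i n.+1) => h].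
    by constructor 2; exists i.
  by constructor 3; lia.
apply: (@no_hole g n.+3) => [|i j /andP [ij jlt]|i j ilt jlt]; first lia.
- have ilt : i < n.+3 by lia.
  move: ij; case: (gcase i ilt) (gcase j jlt) => [->|[i' i'n ->]|->] [->|[j' j'n ->]|->] ij;
    try (exfalso; lia); rewrite ?g0 ?gl ?gS //.
  + by rewrite eq_sym; case/andP: (fab j' j'n).
  + by apply: finj; lia.
  + by case/andP: (fab i' i'n).
- case: (gcase i ilt) (gcase j jlt) => [->|[i' i'n ->]|->] [->|[j' j'n ->]|->];
    rewrite ?g0 ?gl ?gS // ?modnn ?modn_small ?irr_e ?ea ?eb ?fadj ?eab //; try lia;
    by rewrite sym_e ?ea ?eb ?eab //; lia.
Qed.

Lemma clique_induced_path_contra (K : {set T}) f n a b : clique e K ->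
  induced_path f n -> (forall i, i <= n -> f i \notin K) -> a \in K -> b \in K ->
  e a (f 0) -> ~~ e a (f n) -> e b (f n) -> (forall i, i < n -> ~~ e b (f i)) ->
  False.
Proof.
move=> /cliqueP cK fpath fK aK bK ea0 nafn ebn not_before.
have a_meets : exists i, (i <= n) && e a (f i) by exists 0; rewrite ea0.
have a_bounded i : (i <= n) && e a (f i) -> i <= n by case/andP.
have [i0 /andP [i0n eai0] i0_max] := ex_maxnP a_meets a_bounded.
have i0_lt : i0 < n by rewrite ltn_neqAle i0n andbT; apply: contraNneq nafn => <-.
apply: (@no_hole_closing_path (fun l => f (i0 + l)) (n - i0) a b); first lia.
- exact: induced_path_drop.
- by apply: cK => //; apply: contraNneq nafn => ->.
- move=> l le_l; have /negP fl := fK (i0 + l) ltac:(lia).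
  by apply/andP; split; apply/eqP => fla; apply: fl; rewrite fla.
- case=> [|l] le_l; first by rewrite addn0 eai0.
  by apply/negbTE/negP => eal; have := i0_max (i0 + l.+1); rewrite eal andbT; lia.
- move=> l le_l; case: eqVneq => [->|ne]; first by rewrite subnKC.
  by apply/negbTE/not_before; lia.
Qed.

Lemma component_hub (W K : {set T}) z : z \in W -> [disjoint W & K] -> clique e K ->
  exists2 d, d \in comp_in W z &
    {in K, forall b, (exists2 d', d' \in comp_in W z & e b d') -> e b d}.
Proof.
move=> zW WK cK; set D := comp_in W z.
(* A vertex of D with the most neighbours in K works: otherwise a shortest path
   from it to a neighbour of the missed b closes a hole through K. *)
pose deg x := #|[set a in K | e a x]|.
have [d dD d_max] : exists2 d, d \in D & {in D, forall y, deg y <= deg d}.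
  by case: (arg_maxnP deg (comp_in_id W z)) => d; exists d.
exists d => // b bK [d' d'D ebd']; apply/negPn/negP => nbd.
have [n0 [g [wg gn]]] := comp_in_walk dD d'D.
have [n [f [w pn minimal]]] : exists n f, [/\ walk D d f n, e b (f n) &
    forall m g, walk D d g m -> e b (g m) -> n <= m].
  by apply: shortest_walk; exists n0, g; rewrite gn.
have [not_before fpath] := shortest_walk_induced w pn minimal.
have [f0 _ fD] := w.
have [a aK /andP [ead nafn]] : exists2 a, a \in K & e a d && ~~ e a (f n).
  have : ~~ ([set a in K | e a d] \subset [set a in K | e a (f n)]).
    apply/negP => sub; have : [set a in K | e a d] \proper [set a in K | e a (f n)].
      by apply/properP; split => //; exists b; rewrite !inE ?bK ?pn.
    by move/proper_card; rewrite ltnNge d_max ?fD.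
  case/subsetPn => a; rewrite !inE => /andP [aK ead]; rewrite aK /= => nafn.
  by exists a; rewrite ?ead.
apply: (clique_induced_path_contra cK fpath _ aK bK _ nafn pn not_before).
  by move=> i le_in; rewrite (disjointFr WK) // (subsetP (comp_in_sub zW)) ?fD.
by rewrite f0.
Qed.

Lemma independent_dominator (W K : {set T}) : [disjoint W & K] -> clique e K ->
  {in K, forall k, exists2 u, u \in W & e k u} ->
  exists X : {set T},
    [/\ X \subset W, independent e X & {in K, forall k, exists2 x, x \in X & e k x}].
Proof.
move=> WK cK K_out.
pose is_hub (D : {set T}) d := [forall b in K, [exists d' in D, e b d'] ==> e b d].
pose hub z := [pick d in comp_in W z | is_hub (comp_in W z) d].
have hubP z : z \in W ->
    exists2 d, hub z = Some d & (d \in comp_in W z) && is_hub (comp_in W z) d.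
  move=> zW; rewrite /hub; case: pickP => [d hd | no_hub]; first by exists d.
  have [d dD hd] := component_hub zW WK cK.
  have := no_hub d; rewrite /= dD /= => /negbT /negP; case.
  apply/forall_inP => b bK; apply/implyP => /exists_inP [d' d'D ebd'].
  by apply: hd bK _; exists d'.
have hub_comp z y : y \in comp_in W z -> hub y = hub z.
  by move=> /comp_in_eq eq_comp; rewrite /hub eq_comp.
exists [set d in W | hub d == Some d]; split.
- by apply/subsetP => d; rewrite inE => /andP [].
- apply/independentP => x y; rewrite !inE => /andP [xW /eqP hx] /andP [yW /eqP hy].
  apply/negP => exy; have yx : y \in comp_in W x.
    exact: comp_in_edge (comp_in_id W x) xW yW exy.
  suff yx_eq : y = x by rewrite yx_eq irr_e in exy.
  by apply: Some_inj; rewrite -hx -hy (hub_comp x y).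
- move=> k kK; have [u uW eku] := K_out k kK; have [d hu /andP [du hd]] := hubP u uW.
  exists d; first by rewrite inE (subsetP (comp_in_sub uW)) //= (hub_comp u d) // hu.
  move/forall_inP/(_ k kK)/implyP: hd; apply; apply/exists_inP; exists u => //.
  exact: comp_in_id.
Qed.

Lemma nbhd_in_component U K z w : K \subset U -> z \in U :\: K ->
  w \in comp_in (U :\: K) z ->
  let D := comp_in (U :\: K) z in
  nbhd_in U w = nbhd_in (D :|: [set k in K | [exists d in D, e k d]]) w.
Proof.
move=> KU zW wD; have DW := comp_in_sub zW; have wW := subsetP DW w wD.
apply/setP => u; rewrite !in_nbhd_in in_setU; apply/andP/andP.
  move=> [uU ewu]; split=> //; case: (boolP (u \in K)) => uK.
    by apply/orP; right; rewrite inE uK; apply/exists_inP; exists w; rewrite // sym_e.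
  by rewrite (comp_in_edge wD) // !inE uK.
move=> [uDM ewu]; split=> //; case/orP: uDM => [/(subsetP DW) | ].
  by rewrite inE => /andP [].
by rewrite inE => /andP [uK _]; apply: (subsetP KU).
Qed.

Lemma simplicial_in_outside_clique U K : K \subset U -> clique e K -> ~~ (U \subset K) ->
  exists2 w, w \in U :\: K & simplicial_in U w.
Proof.
have [m] := ubnP (#|U| + #|U :\: K|); elim: m U K => // m IH U K lt_m KU cK.
case/subsetPn => z zU zK; set W := U :\: K in lt_m *.
have zW : z \in W by rewrite !inE zK zU.
set D := comp_in W z; set M := [set k in K | [exists d in D, e k d]].
have DW : D \subset W := comp_in_sub zW.
have MK : M \subset K by apply/subsetP => k; rewrite inE => /andP [].
have [eq_U | ne_U] := eqVneq (D :|: M) U; last first.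
  have DMU : D :|: M \subset U.
    by rewrite subUset (subset_trans DW (subsetDl _ _)) (subset_trans MK).
  have lt_U : #|D :|: M| < #|U| by rewrite proper_card // properEneq ne_U.
  have le_W : #|(D :|: M) :\: M| <= #|W|.
    by rewrite subset_leq_card // setDUl setDv setU0 (subset_trans (subsetDl _ _)).
  have [||w] := IH (D :|: M) M _ (subsetUr _ _) (clique_subset MK cK) _.
  - by move: lt_U le_W lt_m; clear; lia.
  - apply/subsetPn; exists z; first by rewrite in_setU comp_in_id.
    by apply: contra zK; apply: (subsetP MK).
  rewrite setDUl setDv setU0 => /setDP [wD _].
  rewrite /simplicial_in -nbhd_in_component // => sw.
  by exists w => //; apply: (subsetP DW).
have WK : [disjoint W & K] by rewrite disjoints_subset /W setDE subsetIr.
have [d dD hub_d] := component_hub zW WK cK.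
have dW : d \in W := subsetP DW d dD.
have Kd : {in K, forall k, e k d}.
  move=> k kK; apply: hub_d => //; have : k \in D :|: M by rewrite eq_U (subsetP KU).
  have kD : k \in D = false.
    by apply: contraTF kK => /(subsetP DW) kW; rewrite (disjointFr WK kW).
  by rewrite in_setU kD inE kK => /exists_inP.
have cK' := cliqueU1 cK Kd.
have K'U : d |: K \subset U by rewrite subUset sub1set (subsetP (subsetDl U K)) ?KU.
case: (boolP (U \subset d |: K)) => UK'.
  exists d => //; apply: clique_subset cK; apply/subsetP => u; rewrite in_nbhd_in.
  case/andP => /(subsetP UK') /setU1P [-> | //]; by rewrite irr_e.
have lt_W : #|U :\: (d |: K)| < #|W|.
  apply: proper_card; apply/properP; split; first by apply: setDS; apply: subsetUr.
  by exists d; rewrite // !inE eqxx.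
have [|w] := IH U (d |: K) _ K'U cK' UK'; first by move: lt_W lt_m; clear; lia.
by rewrite !inE negb_or => /andP [/andP [_ wK] wU]; exists w; rewrite // !inE wK.
Qed.

Lemma exists_simplicial_in U x : x \in U -> exists2 w, w \in U & simplicial_in U w.
Proof.
move=> xU; have [||w] := @simplicial_in_outside_clique U set0 (sub0set U) _ _.
- by apply/cliqueP => y z; rewrite inE.
- by apply/subsetPn; exists x; rewrite ?inE.
- by rewrite setD0 => wU; exists w.
Qed.

Lemma max_independent_in_avoiding U C : well_covered_in U -> C \subset U -> clique e C ->
  {in C, forall c, exists2 u, u \in U :\: C & e c u} ->
  exists2 J, max_independent_in U J & [disjoint J & C].
Proof.
move=> wc CU cC C_out.
have UC : [disjoint U :\: C & C] by rewrite disjoints_subset setDE subsetIr.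
have [X [XUC iX domX]] := independent_dominator UC cC C_out.
have [J XJ maxJ] := wc X (subset_trans XUC (subsetDl U C)) iX.
exists J => //; apply/pred0P => c /=; apply/negP => /andP [cJ cC'].
have [x xX ecx] := domX c cC'; case: maxJ => _ /independentP iJ _.
by move: (iJ c x cJ (subsetP XJ x xX)); rewrite ecx.
Qed.

Lemma simplices_in_cover U : well_covered_in U -> U \subset cover (simplices_in U).
Proof.
have [n] := ubnP #|U|; elim: n U => // n IH U lt_Un wc; apply/subsetP => x xU.
have [v vU sv] := exists_simplicial_in xU.
case: (boolP (x \in cnbhd_in U v)) => xv.
  by apply/bigcupP; exists (cnbhd_in U v) => //; apply/simplices_inP; exists v; rewrite ?vU.
set U' := U :\: cnbhd_in U v.
have U'cov : U' \subset cover (simplices_in U').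
  apply: IH (well_covered_in_delete wc vU sv); rewrite -ltnS (leq_trans _ lt_Un) // ltnS.
  apply: proper_card; apply/properP; split; first exact: subsetDl.
  by exists v; rewrite // !inE eqxx.
have /bigcupP [C CP' xC] : x \in cover (simplices_in U').
  by rewrite (subsetP U'cov) // in_setD xv.
have CU : C \subset U := subset_trans (simplices_in_sub CP') (subsetDl U _).
have cC := clique_simplices_in CP'.
case: (boolP [exists c in C, nbhd_in U c \subset C]) => [/exists_inP [c cC' NcC] | no_c].
  apply/bigcupP; exists (cnbhd_in U c).
    by apply/simplices_inP; exists c; rewrite ?(subsetP CU) //; apply: clique_subset NcC cC.
  rewrite !inE (subsetP CU) //=; case: eqVneq => //= xc.
  by move/cliqueP: cC => /(_ c x cC' xC); rewrite eq_sym => ->.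
have C_out : {in C, forall c, exists2 u, u \in U :\: C & e c u}.
  move=> c cC'; have /subsetPn [u] : ~~ (nbhd_in U c \subset C).
    by apply: contra no_c => NcC; apply/exists_inP; exists c.
  by rewrite in_nbhd_in => /andP [uU ecu] uC; exists u; rewrite // in_setD uC.
have [J maxJ JC] := max_independent_in_avoiding wc CU cC C_out.
by case/negP: (max_independent_in_meets_simplices vU sv U'cov maxJ CP').
Qed.

Lemma partition_simplices_in U : well_covered_in U -> partition (simplices_in U) U.
Proof.
move=> wc; apply/and3P; split; last first.
- by apply/negP => /simplices_inP [w _ /esym /setP /(_ w)]; rewrite !inE eqxx.
- exact: trivIset_simplices_in.
rewrite eqEsubset simplices_in_cover // andbT; apply/bigcupsP => B; exact: simplices_in_sub.
Qed.

Lemma nonsimplicial_dominator w : simplicial e w ->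
  exists X, [/\ X \subset ~: cnbhd e w, independent e X &
    {in cnbhd e w :\: [set v in cnbhd e w | simplicial e v],
     forall y, exists2 x, x \in X & e y x}].
Proof.
move=> sw; set B := cnbhd e w; set SB := [set v in B | simplicial e v].
have cB : clique e B by rewrite /B -cnbhd_inT clique_cnbhd_in ?simplicial_inT.
apply: independent_dominator.
- by rewrite disjoint_sym disjoints_subset setCK subsetDl.
- exact: clique_subset (subsetDl B SB) cB.
move=> y /setDP [yB ySB]; have /subsetPn [u] : ~~ (nbhd e y \subset B).
  by apply: contra ySB => NyB; rewrite inE yB; apply: clique_subset NyB cB.
by rewrite inE => eyu uB; exists u; rewrite // in_setC.
Qed.

Lemma W_leq_card_simplicial k w : W_ e k -> simplicial e w ->
  k <= #|[set v in cnbhd e w | simplicial e v]|.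
Proof.
move=> Wk sw; set B := cnbhd e w; set SB := [set v in B | simplicial e v].
rewrite leqNgt; apply/negP => lt_SBk.
have [X [XB iX domX]] := nonsimplicial_dominator sw.
(* Index #|SB| gets X, the other indices the simplicial vertices of B one by
   one; the set extending X must meet B, necessarily in a simplicial vertex. *)
pose A (i : 'I_k) := if val i == #|SB| then X else [set y in SB | index y (enum SB) == i].
have iA i : independent e (A i).
  rewrite /A; case: ifP => // _; apply/independentP => y z.
  move=> /setIdP [yS /eqP yi] /setIdP [zS /eqP zi]; suff -> : y = z by rewrite irr_e.
  rewrite -mem_enum in yS; rewrite -mem_enum in zS.
  by apply: (index_inj y yS zS); rewrite yi zi.
have dA i j : i != j -> [disjoint A i & A j].
  have SBB : SB \subset B by apply/subsetP => v /setIdP [].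
  have XSB : [disjoint X & SB] by rewrite disjoints_subset (subset_trans XB) // setCS.
  move=> ij; apply/pred0P => y /=; apply/negP => /andP []; rewrite /A.
  case: ifP => [/eqP ei | _]; case: ifP => [/eqP ej | _].
  - by move: ij; rewrite -val_eqE ei ej eqxx.
  - by move=> yX /setIdP [ySB _]; rewrite (disjointFr XSB yX) in ySB.
  - by move=> /setIdP [ySB _] yX; rewrite (disjointFr XSB yX) in ySB.
  - move=> /setIdP [_ /eqP yi] /setIdP [_ /eqP yj].
    by move: ij; rewrite -val_eqE /= -yi -yj eqxx.
have [S [maxS disjS AS]] := Wk A iA dA.
pose it : 'I_k := Ordinal lt_SBk.
have [y yS] := max_independent_in_meets_cnbhd (elimT (max_independentP _) (maxS it))
                                               (in_setT w).
rewrite cnbhd_inT -/B => yB.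
have ySB : y \in SB.
  apply: contraT => ySB; have [|x xX eyx] := domX y _; first by rewrite in_setD ySB.
  have xS : x \in S it by apply: (subsetP (AS it)); rewrite /A /= eqxx.
  by have /andP [/independentP iS _] := maxS it; move: (iS y x yS xS); rewrite eyx.
have lt_ySB : index y (enum SB) < #|SB| by rewrite cardE index_mem mem_enum.
pose iy : 'I_k := Ordinal (ltn_trans lt_ySB lt_SBk).
have y_iy : y \in S iy.
  by apply: (subsetP (AS iy)); rewrite /A /= (ltn_eqF lt_ySB) inE ySB eqxx.
have iy_it : iy != it by rewrite -val_eqE /= (ltn_eqF lt_ySB).
by rewrite (disjointFr (disjS iy it iy_it) y_iy) in yS.
Qed.

End Chordal.

(** * Partitions into simplices give W_k *)

Lemma simplicial_cnbhd_closed w x u : simplicial e w -> x \in cnbhd e w ->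
  simplicial e x -> e x u -> u \in cnbhd e w.
Proof.
rewrite -!simplicial_inT -!cnbhd_inT => sw xw sx exu.
by rewrite -(simplicial_cnbhd_in_eq (in_setT w) sw sx xw) !inE exu orbT.
Qed.

Lemma max_independent_meeting_blocks (P : {set {set T}}) J :
  partition P [set: T] -> {in P, forall B, clique e B} -> independent e J ->
  {in P, forall B, exists2 x, x \in J & x \in B} -> max_independent e J.
Proof.
move=> /and3P [/eqP covP trivP _] cP iJ meets; apply/max_independentP; split=> // I _ iI.
apply: leq_trans (independent_card_le_cover iI cP _) _; first by rewrite covP subsetT.
apply: leq_trans (leq_imset_card (pblock P) J); apply: subset_leq_card.
apply/subsetP => B BP; have [x xJ xB] := meets B BP.
by apply/imsetP; exists x; rewrite ?(def_pblock trivP BP xB).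
Qed.

Lemma card_missing_le_free k (A : 'I_k -> {set T}) B : clique e B ->
  (forall i, independent e (A i)) -> k <= #|[set v in B | simplicial e v]| ->
  #|[set i | [disjoint A i & B]]| <=
  #|[set v in B | simplicial e v & [forall j, v \notin A j]]|.
Proof.
move=> cB iA many; set M := [set i | [disjoint A i & B]].
set F := [set B :&: A j | j in ~: M].
have SBsub : [set v in B | simplicial e v] \subset
    [set v in B | simplicial e v & [forall j, v \notin A j]] :|: cover F.
  apply/subsetP => v /setIdP [vB sv]; rewrite in_setU inE vB sv /=.
  apply/orP; have [free | /forallPn [j /negbNE vj]] := boolP [forall j, v \notin A j].
    by left.
  right; apply/bigcupP; exists (B :&: A j).
    by apply: imset_f; rewrite !inE; apply/pred0Pn; exists v; rewrite /= vj.
  by rewrite inE vB.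
have coverF : #|cover F| <= #|~: M|.
  apply: leq_trans (card_cover_le _) (leq_imset_card _ _) => _ /imsetP [j _ ->].
  exact: card_clique_independent cB (iA j).
have := cardsC M; rewrite card_ord.
by move: many (leq_trans (subset_leq_card SBsub) (leq_card_setU _ _).1) coverF; clear; lia.
Qed.

Section FillBlocks.
Variables (k : nat) (P : {set {set T}}) (A : 'I_k -> {set T}) (x0 : T).
Hypotheses (partP : partition P [set: T]) (simplexP : {in P, forall B, simplex e B}).
Hypothesis manyP : {in P, forall B, k <= #|[set v in B | simplicial e v]|}.
Hypothesis iA : forall i, independent e (A i).
Hypothesis dA : forall i j, i != j -> [disjoint A i & A j].

Definition missing B := [set i | [disjoint A i & B]].
Definition free B := [set v in B | simplicial e v & [forall j, v \notin A j]].
Definition filler B := embedding (missing B) (free B) x0.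
Definition filled i := A i :|: [set filler B i | B in [set B in P | i \in missing B]].

Lemma clique_block B : B \in P -> clique e B.
Proof.
move/simplexP/existsP => [w /andP [sw /eqP ->]].
by rewrite -cnbhd_inT clique_cnbhd_in ?simplicial_inT.
Qed.

Lemma block_closed B x u : B \in P -> x \in B -> simplicial e x -> e x u -> u \in B.
Proof.
by move/simplexP/existsP => [w /andP [sw /eqP ->]]; apply: simplicial_cnbhd_closed.
Qed.

Lemma block_unique B1 B2 x : B1 \in P -> B2 \in P -> x \in B1 -> x \in B2 -> B1 = B2.
Proof.
case/and3P: partP => _ trivP _ B1P B2P xB1 xB2.
by rewrite -(def_pblock trivP B1P xB1) (def_pblock trivP B2P xB2).
Qed.

Lemma card_missing_le_free_block B : B \in P -> #|missing B| <= #|free B|.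
Proof. by move=> BP; apply: card_missing_le_free (clique_block BP) iA (manyP BP). Qed.

Lemma filler_free B i : B \in P -> i \in missing B -> filler B i \in free B.
Proof. by move=> /card_missing_le_free_block le_MF; apply: embedding_in. Qed.

Lemma filler_inj B : B \in P -> {in missing B &, injective (filler B)}.
Proof. by move=> /card_missing_le_free_block le_MF; apply: embedding_inj. Qed.

Lemma filledP i x : x \in filled i ->
  x \in A i \/ exists B, [/\ B \in P, i \in missing B & x = filler B i].
Proof.
case/setUP => [xA | /imsetP [B]]; first by left.
by rewrite inE => /andP [BP iM] ->; right; exists B.
Qed.

Lemma fillerP B i : B \in P -> i \in missing B ->
  [/\ filler B i \in B, simplicial e (filler B i) & forall j, filler B i \notin A j].
Proof. by move=> BP /(filler_free BP); rewrite inE => /and3P [? ? /forallP]. Qed.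

Lemma filled_independent i : independent e (filled i).
Proof.
have away x B : x \in A i -> B \in P -> i \in missing B -> ~~ e (filler B i) x.
  move=> xA BP iM; have [fB sf _] := fillerP BP iM; apply: contraTN iM => efx.
  by rewrite inE; apply/pred0Pn; exists x; rewrite /= xA (block_closed BP fB sf efx).
apply/independentP => x y.
case/filledP => [xA | [B1 [B1P iM1 ->]]] /filledP [yA | [B2 [B2P iM2 ->]]].
- by move/independentP: (iA i); apply.
- by rewrite sym_e away.
- exact: away.
have [f1B1 sf1 _] := fillerP B1P iM1; have [f2B2 _ _] := fillerP B2P iM2.
apply/negP => e12; have f2B1 := block_closed B1P f1B1 sf1 e12.
by move: e12; rewrite (block_unique B2P B1P f2B2 f2B1) irr_e.
Qed.

Lemma filled_disjoint i j : i != j -> [disjoint filled i & filled j].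
Proof.
move=> ij; apply/pred0P => x /=; apply/negP => /andP [/filledP xi /filledP xj].
case: xi xj => [xAi | [B1 [B1P iM ->]]] [xAj | [B2 [B2P jM eqf]]].
- by rewrite (disjointFr (dA ij) xAi) in xAj.
- by have [_ _ /(_ i)] := fillerP B2P jM; rewrite -eqf xAi.
- by have [_ _ /(_ j)] := fillerP B1P iM; rewrite xAj.
have [fB1 _ _] := fillerP B1P iM; have [fB2 _ _] := fillerP B2P jM.
rewrite eqf in fB1; move: iM eqf; rewrite (block_unique B1P B2P fB1 fB2) => iM eqf.
by move: ij; rewrite (filler_inj B2P iM jM eqf) eqxx.
Qed.

Lemma filled_meets i B : B \in P -> exists2 x, x \in filled i & x \in B.
Proof.
move=> BP; have [iM | ] := boolP (i \in missing B).
  have [fB _ _] := fillerP BP iM; exists (filler B i) => //.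
  by apply/setUP; right; apply: imset_f; rewrite inE BP.
by rewrite inE => /pred0Pn [x /andP [xA xB]]; exists x => //; apply/setUP; left.
Qed.

Lemma filled_W : exists S : 'I_k -> {set T}, [/\ forall i, max_independent e (S i),
  forall i j, i != j -> [disjoint S i & S j] & forall i, A i \subset S i].
Proof.
exists filled; split=> [i | | i]; last exact: subsetUl.
  apply: max_independent_meeting_blocks partP _ (filled_independent i) (filled_meets i).
  exact: clique_block.
exact: filled_disjoint.
Qed.

End FillBlocks.

Lemma simplex_partition_W k P : partition P [set: T] -> {in P, forall B, simplex e B} ->
  {in P, forall B, k <= #|[set v in B | simplicial e v]|} -> W_ e k.
Proof.
move=> partP simplexP manyP A iA dA; have [x0 _ | T0] := pickP (fun _ : T => true).
  exact: (filled_W x0 partP simplexP manyP iA dA).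
exists A; split=> // i; rewrite /max_independent iA; apply/forall_inP => I _.
by rewrite (leq_trans (max_card I)) // (eq_card0 T0).
Qed.

End Graph.

Theorem proposition1 (T : finType) (e : rel T) (k : nat) :
  simple_graph e -> 1 <= k -> chordal e ->
  (W_ e k <->
   exists P : {set {set T}},
     [/\ partition P [set: T],
         forall B, B \in P -> simplex e B &
         forall B, B \in P -> k <= #|[set v in B | simplicial e v]| ]).
Proof.
move=> [sym_e irr_e] k_gt0 chordal_e; split=> [Wk | [P [partP simplexP manyP]]].
  have wc := W_well_covered k_gt0 Wk.
  exists (simplices_in e [set: T]); split=> [ | B | B]; rewrite ?simplices_inT //.
    exact: partition_simplices_in.
  by case/existsP => w /andP [sw /eqP ->]; apply: W_leq_card_simplicial.
exact: (simplex_partition_W sym_e irr_e partP simplexP manyP).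
Qed.
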